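(* Let $k\geq 2$ and let $H$ be a maximal outerplanar graph of order $2k$ whose Hamiltonian cycle bounding the outer face is $a_1a_2\cdots a_{2k}a_1$. Let $G_H$ be the graph obtained from $H$ by adding $k$ new vertices $u_1,\dots,u_k$ and the $2k$ new edges $u_ia_{2i-1}$, $u_ia_{2i}$ for $i=1,\dots,k$. Then $G_H$ is a maximal outerplanar graph of order $n=3k$ with exactly $t=k$ vertices of degree $2$, and $\gamma_{\times 2}(G_H)=\frac{2n}{3}=\frac{n+t}{2}=n-t$. *)

From mathcomp Require Import all_boot.
Set Implicit Arguments. Unset Strict Implicit. Unset Printing Implicit Defensive.

Section Graphs.
Variable T : finType.

Definition simple_graph (e : rel T) : Prop := irreflexive e /\ symmetric e.

(* Outerplanarity via the standard circle (convex) drawing: the vertices can be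
   placed in some cyclic order on a circle so that, drawing edges as chords, no
   two edges cross.  Positions are given by an injective map into nat; two
   chords ab and cd cross iff their endpoints strictly interleave. *)
Definition outerplanar (e : rel T) : Prop :=
  exists f : T -> nat, injective f /\
    forall a b c d, e a b -> e c d -> ~ (f a < f c /\ f c < f b /\ f b < f d).

Definition add_edge (e : rel T) (x y : T) : rel T :=
  fun a b => [|| e a b, (a == x) && (b == y) | (a == y) && (b == x)].

Definition maximal_outerplanar (e : rel T) : Prop :=
  simple_graph e /\ outerplanar e /\
  forall x y, x != y -> ~~ e x y -> ~ outerplanar (add_edge e x y).

Definition degree (e : rel T) (v : T) : nat := #|[set y | e v y]|.

Definition double_dominating (e : rel T) (D : {set T}) : bool :=
  [forall v, 2 <= #|[set y in D | (y == v) || e v y]|].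

(* double domination number gamma_{x2}: minimum size of a double dominating set
   (returns #|T| by convention if none exists; irrelevant for graphs without
   isolated vertices) *)
Definition double_dom_number (e : rel T) : nat :=
  \big[minn/#|T|]_(D : {set T} | double_dominating e D) #|D|.

End Graphs.

(* The graph G_H: vertices inl a_j (j : 'I_(2k), a_{j+1} in 1-based naming)
   and inr u_i (i : 'I_k, u_{i+1} in 1-based naming); u_i is joined to the
   0-based vertices 2i and 2i+1 (i.e. a_{2i-1}, a_{2i} in 1-based naming). *)
Definition GH (k : nat) (H : rel 'I_(2 * k)) : rel ('I_(2 * k) + 'I_k)%type :=
  fun x y =>
    match x, y with
    | inl a, inl b => H a b
    | inl a, inr i => (nat_of_ord a == 2 * i) || (nat_of_ord a == (2 * i).+1)
    | inr i, inl a => (nat_of_ord a == 2 * i) || (nat_of_ord a == (2 * i).+1)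
    | inr _, inr _ => false
    end.

From mathcomp Require Import all_boot order zify.
Set Implicit Arguments. Unset Strict Implicit. Unset Printing Implicit Defensive.
Import Order.TTheory.

(* In a convex drawing of the maximal outerplanar graph H, every edge
   a_(2i-1) a_(2i) of the Hamiltonian cycle has all other vertices of H on one
   side, since the rest of the cycle joins them without touching its ends.
   Drawing u_i on the empty side, right next to one end of that chord, gives
   a convex drawing of G_H.  G_H is maximal: if u_i had a further neighbour y,
   some side of the triangle u_i a_(2i-1) a_(2i) would separate y from the
   opposite vertex, yet y reaches that vertex avoiding the ends of the side
   (by the new edge for the side a_(2i-1) a_(2i), along the cycle otherwise).
   The u_i are exactly the vertices of degree 2.  Finally the closed
   neighbourhoods {u_i, a_(2i-1), a_(2i)} partition V(G_H) and each contains
   two vertices of a double dominating set, so gamma_x2 >= 2k; the set of all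
   a_j attains this bound. *)

Section ConvexDrawing.
Variable T : finType.
Implicit Types (e : rel T) (f : T -> nat) (S : seq T).

Definition between f x y v := (f x < f v < f y) || (f y < f v < f x).

Definition noncrossing e f :=
  forall a b c d, e a b -> e c d -> ~ (f a < f c /\ f c < f b /\ f b < f d).

Definition one_sided f x y :=
  forall v w, v \notin [:: x; y] -> w \notin [:: x; y] ->
  between f x y v = between f x y w.

Lemma between_sym f x y v : between f x y v = between f y x v.
Proof. by rewrite /between orbC. Qed.

Lemma one_sided_sym f x y : one_sided f x y -> one_sided f y x.
Proof.
move=> os v w vS wS; rewrite !(between_sym f y).
by apply: os; [move: vS | move: wS]; rewrite !inE orbC.
Qed.

Lemma one_sided_uncrossed f a b c d :
  one_sided f a b \/ one_sided f c d -> ~ (f a < f c /\ f c < f b /\ f b < f d).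
Proof.
have notin v x y : f v != f x -> f v != f y -> v \notin [:: x; y].
  move=> vx vy; rewrite !inE; apply/norP.
  by split; [apply: contra_neq vx | apply: contra_neq vy] => ->.
move=> [] os [ac [cb bd]].
- have cS : c \notin [:: a; b] by apply: notin; lia.
  have dS : d \notin [:: a; b] by apply: notin; lia.
  by move: (os c d cS dS); rewrite /between; lia.
- have bS : b \notin [:: c; d] by apply: notin; lia.
  have aS : a \notin [:: c; d] by apply: notin; lia.
  by move: (os b a bS aS); rewrite /between; lia.
Qed.

Lemma edge_between_eq e f c d v w :
  injective f -> symmetric e -> noncrossing e f -> e c d -> e v w ->
  v \notin [:: c; d] -> w \notin [:: c; d] -> between f c d v = between f c d w.
Proof.
move=> f_inj e_sym nc ecd evw; rewrite !inE -!(inj_eq f_inj) => vS wS.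
have edc : e d c by rewrite e_sym.
have ewv : e w v by rewrite e_sym.
have := nc _ _ _ _ ecd evw; have := nc _ _ _ _ ecd ewv.
have := nc _ _ _ _ edc evw; have := nc _ _ _ _ edc ewv.
have := nc _ _ _ _ evw ecd; have := nc _ _ _ _ evw edc.
have := nc _ _ _ _ ewv ecd; have := nc _ _ _ _ ewv edc.
rewrite /between; lia.
Qed.

Definition minus_verts e S : rel T :=
  [rel v w | [&& e v w, v \notin S & w \notin S]].

Definition connected_minus e S :=
  forall v w, v \notin S -> w \notin S -> connect (minus_verts e S) v w.

Lemma connected_minus_sub e e' S :
  subrel e e' -> connected_minus e S -> connected_minus e' S.
Proof.
move=> sub con v w vS wS; apply: connect_sub (con v w vS wS) => x y /and3P[exy xS yS].
by apply: connect1; rewrite /minus_verts /= (sub _ _ exy) xS yS.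
Qed.

Lemma connected_minus_one_sided e f c d :
  injective f -> symmetric e -> noncrossing e f -> e c d ->
  connected_minus e [:: c; d] -> one_sided f c d.
Proof.
move=> f_inj e_sym nc ecd con v w vS wS; have /connectP[p] := con v w vS wS.
elim: p v {vS} => [|x p IH] v /=; first by move=> _ ->.
move=> /andP[/and3P[evx vS xS] px] w_last.
by rewrite (edge_between_eq f_inj e_sym nc ecd evx) //; apply: IH.
Qed.

Lemma three_chords_separate f p q u y :
  injective f -> uniq [:: y; p; q; u] ->
  [|| between f p q u != between f p q y, between f p u q != between f p u y
    | between f u q p != between f u q y].
Proof. by move=> f_inj; rewrite /= !inE -!(inj_eq f_inj) /between; lia. Qed.

Lemma triangle_apex_neighbour e f p q u y :
  injective f -> symmetric e -> noncrossing e f -> uniq [:: p; q; u] ->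
  e p q -> e p u -> e u q ->
  connected_minus e [:: p; u] -> connected_minus e [:: u; q] ->
  e u y -> y \in [:: p; q; u].
Proof.
move=> f_inj e_sym nc pqu epq epu euq con_pu con_uq euy; apply/contraT => yS.
have uniq_ypqu : uniq [:: y; p; q; u] by rewrite /= yS.
have /and4P[] := uniq_ypqu; rewrite !inE => /norP[yp /norP[yq yu]] /norP[pq pu] qu _.
have notin2 v a b : v != a -> v != b -> v \notin [:: a; b].
  by move=> va vb; rewrite !inE negb_or va vb.
have os_pu := connected_minus_one_sided f_inj e_sym nc epu con_pu.
have os_uq := connected_minus_one_sided f_inj e_sym nc euq con_uq.
have side_pq : between f p q u = between f p q y.
  by apply: (edge_between_eq f_inj e_sym nc epq euy); apply: notin2; rewrite // eq_sym.
have side_pu : between f p u q = between f p u y.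
  by apply: os_pu; apply: notin2; rewrite // eq_sym.
have side_uq : between f u q p = between f u q y.
  by apply: os_uq; apply: notin2; rewrite // eq_sym.
by move: (three_chords_separate f_inj uniq_ypqu); rewrite side_pq side_pu side_uq !eqxx.
Qed.

Lemma add_edge_sym e x y : symmetric e -> symmetric (add_edge e x y).
Proof.
move=> e_sym a b; rewrite /add_edge e_sym; congr (_ || _).
by rewrite orbC; congr (_ || _); apply: andbC.
Qed.

Lemma add_edge_sub e x y : subrel e (add_edge e x y).
Proof. by move=> a b eab; rewrite /add_edge eab. Qed.

End ConvexDrawing.

Section CycleArc.
Variables (N : nat) (N_gt0 : 0 < N).

Definition ord_mod (s : nat) : 'I_N := Ordinal (ltn_pmod s N_gt0).

Lemma ord_mod_val (a : 'I_N) : ord_mod a = a.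
Proof. by apply: val_inj; rewrite /= modn_small. Qed.

Lemma ord_modDr x : ord_mod (x + N) = ord_mod x.
Proof. by apply: val_inj; rewrite /= modnDr. Qed.

Lemma ord_mod_offset_eq x0 s s' : s < N -> s' < N ->
  (ord_mod (x0 + s) == ord_mod (x0 + s')) = (s == s').
Proof. by move=> s_lt s'_lt; rewrite -val_eqE /= eqn_modDl !modn_small. Qed.

Lemma ord_mod_offset x0 (a : 'I_N) : exists2 s, s < N & a = ord_mod (x0 + s).
Proof.
have modE s : ord_mod (x0 + s) = ord_mod (x0 %% N + s).
  by apply: val_inj; rewrite /= modnDml.
suff [s s_lt a_eq] : exists2 s, s < N & a = ord_mod (x0 %% N + s).
  by exists s; rewrite // modE.
move: (x0 %% N) (ltn_pmod x0 N_gt0) (ltn_ord a) => r r_lt a_lt.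
case: (leqP r a) => r_le.
- by exists (a - r); [lia | rewrite subnKC // ord_mod_val].
- exists (a + N - r); first lia.
  by rewrite (_ : r + _ = a + N) ?ord_modDr ?ord_mod_val //; lia.
Qed.

Variables (T : finType) (e : rel T) (emb : 'I_N -> T) (S : seq T).
Hypothesis e_sym : symmetric e.
Hypothesis e_cycle : forall s, e (emb (ord_mod s)) (emb (ord_mod s.+1)).

Lemma connected_minus_cycle x0 L :
  (forall s, s < N -> (emb (ord_mod (x0 + s)) \in S) = (L < s)) ->
  (forall v, v \notin S ->
     exists2 a, emb a \notin S & connect (minus_verts e S) v (emb a)) ->
  connected_minus e S.
Proof.
move=> arc reach.
have to_start a : emb a \notin S -> connect (minus_verts e S) (emb (ord_mod x0)) (emb a).
  have [s s_lt ->] := ord_mod_offset x0 a; rewrite arc // -leqNgt.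
  elim: s s_lt => [|s IH] s_lt s_le; first by rewrite addn0 connect0.
  apply: connect_trans (IH _ _) (connect1 _); try lia.
  by rewrite /minus_verts /= !arc ?addnS ?e_cycle -?leqNgt ?s_le ?(ltnW s_le) ?(ltnW s_lt).
have sym : connect_sym (minus_verts e S).
  apply: sym_connect_sym => v w; rewrite /minus_verts /= e_sym.
  by congr (_ && _); apply: andbC.
move=> v w /reach[a aS va] /reach[b bS wb].
have a_start : connect (minus_verts e S) (emb a) (emb (ord_mod x0)).
  by rewrite sym; apply: to_start.
have b_w : connect (minus_verts e S) (emb b) w by rewrite sym.
exact: connect_trans va (connect_trans a_start (connect_trans (to_start b bS) b_w)).
Qed.

End CycleArc.

Section Construction.
Variables (k : nat) (H : rel 'I_(2 * k)).
Hypothesis k_ge2 : 2 <= k.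
Hypothesis H_maxop : maximal_outerplanar H.
Hypothesis H_cycle :
  forall i j : 'I_(2 * k), nat_of_ord j = (nat_of_ord i).+1 %% (2 * k) -> H i j.

Local Notation T := ('I_(2 * k) + 'I_k)%type.
Local Notation G := (GH H).

Lemma double_k_gt0 : 0 < 2 * k. Proof. lia. Qed.
Local Notation a_ := (ord_mod double_k_gt0).

Definition foot0 (i : 'I_k) := a_ (2 * i).
Definition foot1 (i : 'I_k) := a_ (2 * i).+1.

Lemma half_lt (a : 'I_(2 * k)) : a %/ 2 < k.
Proof. by have := ltn_ord a; lia. Qed.

Definition half (a : 'I_(2 * k)) : 'I_k := Ordinal (half_lt a).

Definition tri (v : T) : 'I_k := match v with inl a => half a | inr i => i end.

Lemma val_foot0 i : val (foot0 i) = 2 * i.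
Proof. by rewrite /= modn_small //; have := ltn_ord i; lia. Qed.

Lemma val_foot1 i : val (foot1 i) = (2 * i).+1.
Proof. by rewrite /= modn_small //; have := ltn_ord i; lia. Qed.

Lemma half_eq a i : (half a == i) = (a == foot0 i) || (a == foot1 i).
Proof. by rewrite -!val_eqE val_foot0 val_foot1 /=; lia. Qed.

Lemma half_foot0 i : half (foot0 i) = i. Proof. by apply/eqP; rewrite half_eq eqxx. Qed.
Lemma half_foot1 i : half (foot1 i) = i. Proof. by apply/eqP; rewrite half_eq eqxx orbT. Qed.

Lemma foot0_neq_foot1 i j : foot0 i != foot1 j.
Proof. by rewrite -val_eqE val_foot0 val_foot1; lia. Qed.

Lemma GH_ua i a : G (inr i) (inl a) = (half a == i).
Proof. by rewrite /= -val_eqE /=; lia. Qed.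

Lemma GH_au a i : G (inl a) (inr i) = (half a == i).
Proof. exact: GH_ua. Qed.

Lemma H_sym : symmetric H. Proof. by case: H_maxop => [[]]. Qed.

Lemma G_sym : symmetric G. Proof. by case=> [a|i] [b|j] //=; rewrite H_sym. Qed.

Lemma G_irr : irreflexive G.
Proof. by case: H_maxop => [[H_irr _] _] [a|i] //=; rewrite H_irr. Qed.

Lemma H_cycle_mod s : H (a_ s) (a_ s.+1).
Proof. by apply: H_cycle; rewrite /= -[in RHS]addn1 modnDml addn1. Qed.

Lemma H_foot i : H (foot0 i) (foot1 i). Proof. exact: H_cycle_mod. Qed.

Lemma a_add x y : x + 2 * k = y -> a_ x = a_ y.
Proof. by move=> <-; rewrite ord_modDr. Qed.

Lemma feet_arc (i : 'I_k) s : s < 2 * k ->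
  (a_ ((2 * i).+2 + s) \in [:: foot0 i; foot1 i]) = (2 * k - 3 < s).
Proof.
move=> s_lt; rewrite !inE /foot0 /foot1.
rewrite (@a_add (2 * i) ((2 * i).+2 + (2 * k - 2))) ?(@a_add (2 * i).+1 ((2 * i).+2 + (2 * k - 1)));
  rewrite ?ord_mod_offset_eq; lia.
Qed.

Lemma connected_minus_feet i : connected_minus H [:: foot0 i; foot1 i].
Proof.
apply: (@connected_minus_cycle _ double_k_gt0 _ H id _ H_sym H_cycle_mod
  (2 * i).+2 (2 * k - 3)); first exact: feet_arc.
by move=> v vS; exists v.
Qed.

Lemma GH_reach_cycle (S : seq T) :
  (forall j, inr j \notin S -> inl (foot0 j) \notin S) ->
  forall v, v \notin S -> exists2 a, inl a \notin S & connect (minus_verts G S) v (inl a).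
Proof.
move=> foot0S [a|j] vS; first by exists a; rewrite ?connect0.
exists (foot0 j); first exact: foot0S.
by apply/connect1/and3P; split; rewrite ?GH_ua ?half_foot0 ?foot0S.
Qed.

Lemma connected_minus_foot0_u i : connected_minus G [:: inl (foot0 i); inr i].
Proof.
apply: (@connected_minus_cycle _ double_k_gt0 _ G inl _ G_sym H_cycle_mod
  (2 * i).+1 (2 * k - 2)).
  move=> s s_lt; rewrite !inE -!sum_eqE /= orbF /foot0.
  rewrite (@a_add (2 * i) ((2 * i).+1 + (2 * k - 1))) ?ord_mod_offset_eq; lia.
apply: GH_reach_cycle => j; rewrite !inE -!sum_eqE /= orbF => ji.
by apply: contra_neq ji => /(congr1 half); rewrite !half_foot0.
Qed.

Lemma connected_minus_u_foot1 i : connected_minus G [:: inr i; inl (foot1 i)].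
Proof.
apply: (@connected_minus_cycle _ double_k_gt0 _ G inl _ G_sym H_cycle_mod
  (2 * i).+2 (2 * k - 2)).
  move=> s s_lt; rewrite !inE -!sum_eqE /= /foot1.
  rewrite (@a_add (2 * i).+1 ((2 * i).+2 + (2 * k - 1))) ?ord_mod_offset_eq; lia.
by apply: GH_reach_cycle => j _; rewrite !inE -!sum_eqE /= foot0_neq_foot1.
Qed.

Lemma GH_add_u_not_outerplanar (e : rel T) i y :
  symmetric e -> subrel G e -> e (inr i) y ->
  y \notin [:: inl (foot0 i); inl (foot1 i); inr i] -> ~ outerplanar e.
Proof.
move=> e_sym Ge euy /negP yS [f [f_inj nc]]; apply: yS.
apply: (triangle_apex_neighbour f_inj e_sym nc _ _ _ _
  (connected_minus_sub Ge (@connected_minus_foot0_u i))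
  (connected_minus_sub Ge (@connected_minus_u_foot1 i)) euy).
- by rewrite /= !inE -!sum_eqE /= orbF foot0_neq_foot1.
- exact/Ge/H_foot.
- by apply: Ge; rewrite GH_au half_foot0.
- by apply: Ge; rewrite GH_ua half_foot1.
Qed.

Lemma GH_add_edge_not_outerplanar x y :
  x != y -> ~~ G x y -> ~ outerplanar (add_edge G x y).
Proof.
have e_sym := add_edge_sym x y G_sym.
have Ge := @add_edge_sub _ G x y.
have exy : add_edge G x y x y by rewrite /add_edge !eqxx orbT.
have eyx : add_edge G x y y x by rewrite /add_edge !eqxx !orbT.
case: x y e_sym Ge exy eyx => [a|i] [b|j] e_sym Ge exy eyx xy Gxy.
- case=> f [f_inj nc]; case: H_maxop => _ [_ H_max].
  apply: (H_max a b); rewrite -?(inj_eq inl_inj) //.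
  exists (f \o inl); split; first by move=> u v /f_inj [].
  by move=> u v w z huv hwz; apply: nc; rewrite /add_edge -!sum_eqE /=.
- apply: (GH_add_u_not_outerplanar e_sym Ge eyx).
  by rewrite !inE -!sum_eqE /= orbF -half_eq -GH_au.
- apply: (GH_add_u_not_outerplanar e_sym Ge exy).
  by rewrite !inE -!sum_eqE /= orbF -half_eq -GH_ua.
- apply: (GH_add_u_not_outerplanar e_sym Ge exy).
  by rewrite !inE -!sum_eqE /= eq_sym.
Qed.

Section Drawing.
Variable fH : 'I_(2 * k) -> nat.
Hypotheses (fH_inj : injective fH) (fH_nc : noncrossing H fH).

Definition inside i := between fH (foot0 i) (foot1 i) (a_ (2 * i).+2).

Lemma between_feet i a :
  a \notin [:: foot0 i; foot1 i] -> between fH (foot0 i) (foot1 i) a = inside i.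
Proof.
move=> aS; apply: (connected_minus_one_sided fH_inj H_sym fH_nc (H_foot i)
  (@connected_minus_feet i)) => //.
by have := feet_arc i (s := 0); rewrite addn0 => ->; lia.
Qed.

(* [u_i] is drawn right after [anchor i], on the side of the chord
   [foot0 i] [foot1 i] where no other vertex of [H] lies. *)
Definition anchor i :=
  if (fH (foot0 i) < fH (foot1 i)) == inside i then foot1 i else foot0 i.

Lemma anchor_feet i : (anchor i == foot0 i) || (anchor i == foot1 i).
Proof. by rewrite /anchor; case: ifP; rewrite eqxx ?orbT. Qed.

Lemma half_anchor i : half (anchor i) = i.
Proof. by apply/eqP; rewrite half_eq anchor_feet. Qed.

Lemma fH_anchor i :
  fH (anchor i) = (if inside i then maxn else minn) (fH (foot0 i)) (fH (foot1 i)).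
Proof.
have : fH (foot0 i) != fH (foot1 i) by rewrite (inj_eq fH_inj) foot0_neq_foot1.
by rewrite /anchor; case: (inside i); case: ltngtP => /=; lia.
Qed.

Definition base (v : T) := match v with inl a => a | inr i => anchor i end.

Definition fG (v : T) := 3 * fH (base v) + (if v is inl _ then 1 else 2).

Lemma fG_inj : injective fG.
Proof.
move=> [a|i] [b|j]; rewrite /fG /= => eq_fG; try lia.
  by congr inl; apply: fH_inj; lia.
by congr inr; rewrite -(half_anchor i) -(half_anchor j); congr half; apply: fH_inj; lia.
Qed.

Lemma between_fG_u i x v :
  x \in [:: foot0 i; foot1 i] -> v \notin [:: inr i; inl x] ->
  between fG (inr i) (inl x) v = (x != anchor i) && inside i.
Proof.
have ne01 : fH (foot0 i) != fH (foot1 i) by rewrite (inj_eq fH_inj) foot0_neq_foot1.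
have feet b : b \in [:: foot0 i; foot1 i] -> (fH b == fH (foot0 i)) || (fH b == fH (foot1 i)).
  by rewrite !inE !(inj_eq fH_inj).
have far b : b \notin [:: foot0 i; foot1 i] ->
    [&& fH b != fH (foot0 i), fH b != fH (foot1 i) &
        between fH (foot0 i) (foot1 i) b == inside i].
  by move=> bS; rewrite !(inj_eq fH_inj) between_feet // eqxx andbT; rewrite !inE negb_or in bS.
move=> /feet xS; have := fH_anchor i; rewrite -(inj_eq fH_inj) /fG /between.
case: v => [a|j]; rewrite !inE -!sum_eqE /= => hA vS.
- rewrite -(inj_eq fH_inj) in vS.
  case: (boolP (a \in [:: foot0 i; foot1 i])) => [/feet|/far]; rewrite /between;
    by case: (inside i) hA; lia.
- have /far : anchor j \notin [:: foot0 i; foot1 i].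
    by rewrite !inE -half_eq half_anchor; rewrite orbF in vS.
  by rewrite /between; case: (inside i) hA; lia.
Qed.

Lemma fG_one_sided_u i x : G (inr i) (inl x) -> one_sided fG (inr i) (inl x).
Proof.
rewrite GH_ua half_eq -mem_seq2 => xS v w vS wS.
by rewrite !between_fG_u.
Qed.

Lemma fG_noncrossing : noncrossing G fG.
Proof.
have cases v w : G v w ->
    (exists a b, [/\ v = inl a, w = inl b & H a b]) \/ one_sided fG v w.
  case: v w => [a|i] [b|j] //= Gvw; first by left; exists a, b.
  - by right; apply/one_sided_sym/fG_one_sided_u; rewrite G_sym.
  - by right; apply: fG_one_sided_u.
move=> v w x y /cases[[a [b [-> -> Hab]]]|os] /cases[[c [d [-> -> Hcd]]]|os'].
- by rewrite /fG /= => ?; apply: (fH_nc Hab Hcd); lia.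
- by apply: one_sided_uncrossed; right.
- by apply: one_sided_uncrossed; left.
- by apply: one_sided_uncrossed; left.
Qed.

End Drawing.

Lemma GH_outerplanar : outerplanar G.
Proof.
case: H_maxop => _ [[fH [fH_inj fH_nc]] _].
by exists (fG fH); split; [exact: fG_inj | exact: fG_noncrossing].
Qed.

Lemma GH_maximal_outerplanar : maximal_outerplanar G.
Proof.
split; first by split; [exact: G_irr | exact: G_sym].
by split; [exact: GH_outerplanar | exact: GH_add_edge_not_outerplanar].
Qed.

Definition cyc_next (a : 'I_(2 * k)) := a_ (a + 1).
Definition cyc_prev (a : 'I_(2 * k)) := a_ (a + (2 * k - 1)).

Lemma H_next a : H a (cyc_next a).
Proof. by have := H_cycle_mod a; rewrite ord_mod_val -[a.+1]addn1. Qed.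

Lemma H_prev a : H a (cyc_prev a).
Proof.
have := H_cycle_mod (a + (2 * k - 1)); rewrite H_sym -(@a_add a) ?ord_mod_val //; lia.
Qed.

Lemma cyc_next_neq a : cyc_next a != a.
Proof.
have := @ord_mod_offset_eq _ double_k_gt0 a 1 0.
by rewrite addn0 ord_mod_val => ->; lia.
Qed.

Lemma cyc_next_neq_prev a : cyc_next a != cyc_prev a.
Proof. by rewrite ord_mod_offset_eq; lia. Qed.

Lemma degree_u i : degree G (inr i) = 2.
Proof.
rewrite /degree (_ : [set y | G (inr i) y] = [set inl (foot0 i); inl (foot1 i)]).
  by rewrite cards2 (inj_eq inl_inj) foot0_neq_foot1.
by apply/setP => -[a|j]; rewrite !inE ?GH_ua ?half_eq -!sum_eqE.
Qed.

Lemma degree_a a : 2 < degree G (inl a).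
Proof.
apply/card_gt2P; exists (inl (cyc_next a)), (inl (cyc_prev a)), (inr (half a)).
by rewrite !inE GH_au eqxx /= H_next H_prev (inj_eq inl_inj) cyc_next_neq_prev.
Qed.

Lemma degree2_vertices : [set v | degree G v == 2] = inr @: [set: 'I_k].
Proof.
apply/setP => -[a|i]; rewrite !inE.
- have /gtn_eqF -> := degree_a a.
  by apply/esym/imsetP => -[].
- by rewrite degree_u eqxx; apply/esym/imsetP; exists i.
Qed.

Lemma closed_nbhd_u (D : {set T}) i :
  [set y in D | (y == inr i) || G (inr i) y] = [set y in D | tri y == i].
Proof. by apply/setP => -[a|j]; rewrite !inE ?GH_ua -?sum_eqE ?orbF. Qed.

Lemma double_dominating_ge D : double_dominating G D -> 2 * k <= #|D|.
Proof.
move=> /forallP dom; rewrite -sum1_card (partition_big tri predT) //=.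
apply: (@leq_trans (\sum_(j < k) 2)); first by rewrite sum_nat_const card_ord mulnC.
apply: leq_sum => j _.
by rewrite sum1dep_card -closed_nbhd_u; apply: dom.
Qed.

Lemma double_dominating_cycle : double_dominating G (inl @: [set: 'I_(2 * k)]).
Proof.
apply/forallP => -[a|i]; apply/card_gt1P.
- exists (inl a), (inl (cyc_next a)).
  by rewrite !inE !imset_f // eqxx /= H_next !(inj_eq inl_inj) orbT eq_sym cyc_next_neq.
- exists (inl (foot0 i)), (inl (foot1 i)).
  rewrite !inE !imset_f // !GH_ua half_foot0 half_foot1 eqxx !orbT.
  by rewrite (inj_eq inl_inj) foot0_neq_foot1.
Qed.

Lemma double_dom_number_GH : double_dom_number G = 2 * k.
Proof.
apply/eqP; rewrite eqn_leq; apply/andP; split.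
  have : double_dom_number G <= #|inl @: [set: 'I_(2 * k)]| :=
    bigmin_le_cond #|{: T}| (fun D : {set T} => #|D|) double_dominating_cycle.
  by rewrite card_imset ?cardsT ?card_ord //; exact: inl_inj.
have k_le : 2 * k <= #|{: T}| by rewrite card_sum !card_ord; lia.
exact: (@le_bigmin _ _ _ (index_enum _) (fun D : {set T} => #|D|) _ _
  (double_dominating G) k_le double_dominating_ge).
Qed.

End Construction.

Theorem mainTheorem3 (k : nat) (hk : 2 <= k) (H : rel 'I_(2 * k)) :
  maximal_outerplanar H ->
  (* a_1 a_2 ... a_{2k} a_1 is the (outer) Hamiltonian cycle of H;
     a_{j+1} is the ordinal j *)
  (forall i j : 'I_(2 * k), nat_of_ord j = (nat_of_ord i).+1 %% (2 * k) -> H i j) ->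
  let G := GH H in
  let n := #|{: 'I_(2 * k) + 'I_k}| in
  let t := #|[set v | degree G v == 2]| in
  maximal_outerplanar G /\ n = 3 * k /\ t = k /\
  3 * double_dom_number G = 2 * n /\
  2 * double_dom_number G = n + t /\
  double_dom_number G = n - t.
Proof.
move=> H_maxop H_cycle G n t.
have n_eq : n = 3 * k by rewrite /n card_sum !card_ord; lia.
have t_eq : t = k.
  by rewrite /t degree2_vertices // card_imset ?cardsT ?card_ord //; exact: inr_inj.
rewrite /G double_dom_number_GH // n_eq t_eq.
split; first exact: GH_maximal_outerplanar.
by do 4 (split; first lia); lia.
Qed.
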